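(* Let $m\ge1$ and let $\phi\in C^\infty(\mathbb R^2)$ satisfy, for some $C>0$ and all $z\in\mathbb R^2$, $|D^3\phi(z)|\le C|z|^{2m-1}$, $|D^2\phi(z)|\le C|z|^{2m}$, $|D\phi(z)|\le C|z|^{2m+1}$. Then there is a constant $C'>0$ such that for all $z,\zeta\in\mathbb R^2$, $$\Big|\phi(\zeta)-\phi(z)+\mu_{\zeta,z}^{2m}\,\omega(z,\zeta)-\langle ZF(z),\zeta-z\rangle\Big|\le C'\mu_{\zeta,z}^{2m}|\zeta-z|^2,$$ where $\mu_{\zeta,z}=\max\{|z|,|\zeta|\}$.
   Context: For $z=(x,y)$, $\zeta=(\xi,\eta)\in\mathbb R^2$, $\omega(z,\zeta)=x\eta-y\xi$. For $\phi\in C^\infty(\mathbb R^2)$ let $F(z,t)=\phi(z)-t$, $XF(z)=\phi_x(z)-|z|^{2m}y$, $YF(z)=\phi_y(z)+|z|^{2m}x$ (the derivatives of $F$ along $X=\partial_x+|z|^{2m}y\partial_t$, $Y=\partial_y-|z|^{2m}x\partial_t$), and $ZF(z)=(XF(z),YF(z))\in\mathbb R^2$. $|D^k\phi(z)|$ is the maximum of the absolute values of all $k$-th order partial derivatives of $\phi$ at $z$. *)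

From Stdlib Require Import Reals.
Open Scope R_scope.

Definition norm2 (x y : R) : R := sqrt (x ^ 2 + y ^ 2).

Definition omega (x y xi eta : R) : R := x * eta - y * xi.

Definition continuous2 (f : R -> R -> R) : Prop :=
  forall x y eps, 0 < eps -> exists delta, 0 < delta /\
    forall x' y', norm2 (x' - x) (y' - y) < delta -> Rabs (f x' y' - f x y) < eps.

(* D is the family of all partial derivatives of phi:
   D i j = d_x^i d_y^j phi, each continuous; such a family exists iff phi is
   C^infinity on R^2, and it is then unique. *)
Definition smooth_family (phi : R -> R -> R) (D : nat -> nat -> R -> R -> R) : Prop :=
  D 0%nat 0%nat = phi /\
  forall i j,
    continuous2 (D i j) /\
    (forall x y, derivable_pt_lim (fun t => D i j t y) x (D (S i) j x y)) /\
    (forall x y, derivable_pt_lim (fun t => D i j x t) y (D i (S j) x y)).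

Definition Dk_bounded (D : nat -> nat -> R -> R -> R) (k : nat) (x y b : R) : Prop :=
  forall i j, (i + j)%nat = k -> Rabs (D i j x y) <= b.

(* ZF(z) = (phi_x - |z|^{2m} y, phi_y + |z|^{2m} x) *)
Definition XF (D : nat -> nat -> R -> R -> R) (m : nat) (x y : R) : R :=
  D 1%nat 0%nat x y - norm2 x y ^ (2 * m) * y.
Definition YF (D : nat -> nat -> R -> R -> R) (m : nat) (x y : R) : R :=
  D 0%nat 1%nat x y + norm2 x y ^ (2 * m) * x.

(* Writing ζ - z = (a, b) and M = μ², the quantity to bound splits as
     [φ(ζ) - φ(z) - ⟨∇φ(z), ζ - z⟩] + (M^m - |z|^(2m)) ω(z, ζ).
   The first bracket is a second-order Taylor remainder, estimated by the
   mean value theorem along the two sides of the rectangle spanned by z and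
   ζ; on that rectangle |p|² <= |z|² + |ζ|² <= 2M, so the hypothesis on D²φ
   bounds it by 2^(m+1) C M^m (a² + b²).  For the second term,
   M^m - |z|^(2m) <= m M^(m-1) (M - |z|²), while by the Lagrange identities
   |ω(z, ζ)| <= |z| |ζ - z| and | |ζ|² - |z|² | <= |ζ - z| |ζ + z| <= 2 μ |ζ - z|. *)
From Stdlib Require Import Reals Lra Psatz.
Open Scope R_scope.

Lemma sqnorm_ge0 (a b : R) : 0 <= a ^ 2 + b ^ 2.
Proof. pose proof pow2_ge_0 a; pose proof pow2_ge_0 b; lra. Qed.

Definition between (a b c : R) : Prop := (a <= c <= b) \/ (b <= c <= a).

Lemma between_l a b : between a b a.
Proof. unfold between; lra. Qed.

Lemma between_r a b : between a b b.
Proof. unfold between; destruct (Rle_dec a b); lra. Qed.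

Lemma between_trans a b c d : between a b c -> between a c d -> between a b d.
Proof. unfold between; lra. Qed.

Lemma between_dist a b c : between a b c -> Rabs (c - a) <= Rabs (b - a).
Proof.
  intros Hc; unfold between, Rabs in *.
  destruct (Rcase_abs (c - a)), (Rcase_abs (b - a)); lra.
Qed.

Lemma between_sqr a b c : between a b c -> c ^ 2 <= a ^ 2 + b ^ 2.
Proof. unfold between; intros [H|H]; destruct (Rle_dec 0 c); nra. Qed.

Lemma MVT_between (f f' : R -> R) (a b : R) :
  (forall t, derivable_pt_lim f t (f' t)) ->
  exists c, between a b c /\ f b - f a = f' c * (b - a).
Proof.
  intros Hf; destruct (Rtotal_order a b) as [Hab|[<-|Hba]].
  - destruct (MVT_cor2 f f' a b Hab (fun c _ => Hf c)) as [c [E Hc]].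
    exists c; split; [left; lra | exact E].
  - exists a; split; [apply between_l | ring].
  - destruct (MVT_cor2 f f' b a Hba (fun c _ => Hf c)) as [c [E Hc]].
    exists c; split; [right; lra | lra].
Qed.

Lemma Rabs_sub_le_between (f f' : R -> R) (a b K : R) :
  (forall t, derivable_pt_lim f t (f' t)) ->
  (forall t, between a b t -> Rabs (f' t) <= K) ->
  Rabs (f b - f a) <= K * Rabs (b - a).
Proof.
  intros Hf HK; destruct (MVT_between f f' a b Hf) as [c [Hc ->]].
  rewrite Rabs_mult; apply Rmult_le_compat_r; [apply Rabs_pos | auto].
Qed.

Lemma taylor1_remainder_le (f f' f'' : R -> R) (a b K : R) :
  (forall t, derivable_pt_lim f t (f' t)) ->
  (forall t, derivable_pt_lim f' t (f'' t)) ->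
  (forall t, between a b t -> Rabs (f'' t) <= K) ->
  Rabs (f b - f a - f' a * (b - a)) <= K * (b - a) ^ 2.
Proof.
  intros Hf Hf' HK.
  assert (K_ge0 : 0 <= K) by (apply Rle_trans with (2 := HK a (between_l a b)); apply Rabs_pos).
  destruct (MVT_between f f' a b Hf) as [c [Hc ->]].
  assert (Hf'c : Rabs (f' c - f' a) <= K * Rabs (c - a)).
  { apply (Rabs_sub_le_between f' f''); auto.
    intros t Ht; apply HK, (between_trans a b c t Hc Ht). }
  replace (f' c * (b - a) - f' a * (b - a)) with ((f' c - f' a) * (b - a)) by ring.
  rewrite Rabs_mult, <- (pow2_abs (b - a)).
  apply Rle_trans with (K * Rabs (c - a) * Rabs (b - a));
    [apply Rmult_le_compat_r; [apply Rabs_pos | exact Hf'c]|].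
  pose proof (Rmult_le_compat_l K _ _ K_ge0 (between_dist a b c Hc)).
  pose proof (Rabs_pos (b - a)); nra.
Qed.

Section SecondOrderTaylor.

Variable D : nat -> nat -> R -> R -> R.
Hypothesis D_dx : forall i j x y, derivable_pt_lim (fun t => D i j t y) x (D (S i) j x y).
Hypothesis D_dy : forall i j x y, derivable_pt_lim (fun t => D i j x t) y (D i (S j) x y).

Lemma taylor2_rectangle (x y xi eta K : R) :
  (forall i j p q, (i + j = 2)%nat -> between x xi p -> between y eta q ->
     Rabs (D i j p q) <= K) ->
  Rabs (D 0 0 xi eta - D 0 0 x y - (D 1 0 x y * (xi - x) + D 0 1 x y * (eta - y)))
    <= 2 * K * ((xi - x) ^ 2 + (eta - y) ^ 2).
Proof.
  intros HK.
  assert (K_ge0 : 0 <= K)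
    by (apply Rle_trans with (2 := HK 2%nat 0%nat x y eq_refl (between_l _ _) (between_l _ _));
        apply Rabs_pos).
  assert (Hx : Rabs (D 0 0 xi y - D 0 0 x y - D 1 0 x y * (xi - x)) <= K * (xi - x) ^ 2).
  { apply (taylor1_remainder_le (fun t => D 0 0 t y) (fun t => D 1 0 t y) (fun t => D 2 0 t y));
      auto.
    intros t Ht; apply HK; auto using between_l. }
  assert (Hy : Rabs (D 0 0 xi eta - D 0 0 xi y - D 0 1 xi y * (eta - y)) <= K * (eta - y) ^ 2).
  { apply (taylor1_remainder_le (fun t => D 0 0 xi t) (fun t => D 0 1 xi t) (fun t => D 0 2 xi t));
      auto.
    intros t Ht; apply HK; auto using between_r. }
  assert (Hxy : Rabs (D 0 1 xi y - D 0 1 x y) <= K * Rabs (xi - x)).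
  { apply (Rabs_sub_le_between (fun t => D 0 1 t y) (fun t => D 1 1 t y)); auto.
    intros t Ht; apply HK; auto using between_l. }
  replace (D 0 0 xi eta - D 0 0 x y - (D 1 0 x y * (xi - x) + D 0 1 x y * (eta - y)))
    with ((D 0 0 xi y - D 0 0 x y - D 1 0 x y * (xi - x))
          + (D 0 0 xi eta - D 0 0 xi y - D 0 1 xi y * (eta - y))
          + (D 0 1 xi y - D 0 1 x y) * (eta - y)) by ring.
  assert (Hcross : Rabs (xi - x) * Rabs (eta - y) <= ((xi - x) ^ 2 + (eta - y) ^ 2) / 2).
  { rewrite <- (pow2_abs (xi - x)), <- (pow2_abs (eta - y)).
    pose proof pow2_ge_0 (Rabs (xi - x) - Rabs (eta - y)); nra. }
  eapply Rle_trans; [apply Rabs_triang|].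
  eapply Rle_trans; [apply Rplus_le_compat_r, Rabs_triang|].
  rewrite Rabs_mult.
  pose proof (Rmult_le_compat_r (Rabs (eta - y)) _ _ (Rabs_pos _) Hxy).
  pose proof (Rmult_le_compat_l K _ _ K_ge0 Hcross).
  pose proof (Rmult_le_pos K _ K_ge0 (sqnorm_ge0 (xi - x) (eta - y))).
  lra.
Qed.

End SecondOrderTaylor.

Lemma sqrt_pow_double (s : R) (n : nat) : 0 <= s -> sqrt s ^ (2 * n) = s ^ n.
Proof. intros Hs; rewrite pow_mult, pow2_sqrt; auto. Qed.

Lemma norm2_pow_double (a b : R) (n : nat) : norm2 a b ^ (2 * n) = (a ^ 2 + b ^ 2) ^ n.
Proof. apply sqrt_pow_double, sqnorm_ge0. Qed.

Lemma norm2_sqr (a b : R) : norm2 a b ^ 2 = a ^ 2 + b ^ 2.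
Proof. apply pow2_sqrt, sqnorm_ge0. Qed.

Lemma Rmax_sqrt (s t : R) : 0 <= s -> 0 <= t -> Rmax (sqrt s) (sqrt t) = sqrt (Rmax s t).
Proof.
  intros Hs Ht; unfold Rmax.
  destruct (Rle_dec (sqrt s) (sqrt t)) as [Hst|Hst], (Rle_dec s t) as [Hst'|Hst']; auto.
  - pose proof sqrt_le_0 s t Hs Ht Hst; lra.
  - pose proof sqrt_le_1 s t Hs Ht Hst'; lra.
Qed.

Lemma pow_sub_pow_le (r M : R) (n : nat) : 0 <= r <= M ->
  M ^ S n - r ^ S n <= INR (S n) * M ^ n * (M - r).
Proof.
  intros Hr; induction n as [|n IH]; [simpl; lra|].
  pose proof pow_incr r M (S n) Hr; pose proof pow_le r (S n) (proj1 Hr).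
  pose proof pow_le M n ltac:(lra).
  rewrite S_INR.
  replace (M ^ S (S n) - r ^ S (S n)) with (M * (M ^ S n - r ^ S n) + r ^ S n * (M - r))
    by (simpl; ring).
  replace (M ^ S n) with (M * M ^ n) in * by (simpl; ring).
  nra.
Qed.

Lemma sqr_omega_le (x y xi eta : R) :
  omega x y xi eta ^ 2 <= (x ^ 2 + y ^ 2) * ((xi - x) ^ 2 + (eta - y) ^ 2).
Proof.
  pose proof pow2_ge_0 (x * (xi - x) + y * (eta - y)); unfold omega; nra.
Qed.

Lemma sqr_sqnorm_sub_le (x y xi eta : R) :
  ((xi ^ 2 + eta ^ 2) - (x ^ 2 + y ^ 2)) ^ 2
    <= ((xi - x) ^ 2 + (eta - y) ^ 2) * ((xi + x) ^ 2 + (eta + y) ^ 2).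
Proof.
  pose proof pow2_ge_0 ((xi - x) * (eta + y) - (eta - y) * (xi + x)); nra.
Qed.

Lemma sqnorm_gap_omega_le (x y xi eta : R) :
  let M := Rmax (x ^ 2 + y ^ 2) (xi ^ 2 + eta ^ 2) in
  (M - (x ^ 2 + y ^ 2)) * Rabs (omega x y xi eta)
    <= 2 * M * ((xi - x) ^ 2 + (eta - y) ^ 2).
Proof.
  intros M.
  set (N := (xi - x) ^ 2 + (eta - y) ^ 2).
  assert (N_ge0 : 0 <= N) by apply sqnorm_ge0.
  pose proof sqnorm_ge0 x y; pose proof sqnorm_ge0 xi eta.
  unfold M, Rmax; destruct (Rle_dec (x ^ 2 + y ^ 2) (xi ^ 2 + eta ^ 2)) as [Hle|Hgt].
  2:{ pose proof (Rabs_pos (omega x y xi eta)); nra. }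
  assert (Hsum : (xi + x) ^ 2 + (eta + y) ^ 2 <= 4 * (xi ^ 2 + eta ^ 2))
    by (pose proof (sqnorm_ge0 (xi - x) (eta - y)); nra).
  assert (Hgap : ((xi ^ 2 + eta ^ 2) - (x ^ 2 + y ^ 2)) ^ 2 <= 4 * (xi ^ 2 + eta ^ 2) * N).
  { pose proof (sqr_sqnorm_sub_le x y xi eta) as Hlag; fold N in Hlag.
    pose proof (Rmult_le_compat_l N _ _ N_ge0 Hsum); lra. }
  assert (Homega : Rabs (omega x y xi eta) ^ 2 <= (xi ^ 2 + eta ^ 2) * N).
  { rewrite pow2_abs; pose proof (sqr_omega_le x y xi eta) as Hlag; fold N in Hlag.
    pose proof (Rmult_le_compat_r N _ _ N_ge0 Hle); lra. }
  apply Rsqr_incr_0_var; [| pose proof (Rmult_le_pos _ _ (sqnorm_ge0 xi eta) N_ge0); lra].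
  rewrite !Rsqr_pow2, Rpow_mult_distr.
  replace ((2 * (xi ^ 2 + eta ^ 2) * N) ^ 2)
    with (4 * (xi ^ 2 + eta ^ 2) * N * ((xi ^ 2 + eta ^ 2) * N)) by ring.
  apply Rmult_le_compat; auto using pow2_ge_0.
Qed.

Lemma omega_increment_le (x y xi eta : R) (n : nat) :
  let M := Rmax (x ^ 2 + y ^ 2) (xi ^ 2 + eta ^ 2) in
  Rabs ((M ^ n - (x ^ 2 + y ^ 2) ^ n) * omega x y xi eta)
    <= 2 * INR n * M ^ n * ((xi - x) ^ 2 + (eta - y) ^ 2).
Proof.
  intros M.
  pose proof (sqnorm_gap_omega_le x y xi eta) as Hgap; cbv zeta in Hgap; fold M in Hgap.
  assert (HR : 0 <= x ^ 2 + y ^ 2 <= M) by (split; [apply sqnorm_ge0 | apply Rmax_l]).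
  pose proof (sqnorm_ge0 (xi - x) (eta - y)) as N_ge0.
  pose proof Rabs_pos (omega x y xi eta).
  destruct n as [|n]; [simpl; rewrite Rminus_diag, Rmult_0_l, Rabs_R0; lra|].
  pose proof (pow_incr _ _ (S n) HR).
  assert (Hcoef : 0 <= INR (S n) * M ^ n)
    by (apply Rmult_le_pos; [apply pos_INR | apply pow_le; lra]).
  rewrite Rabs_mult, Rabs_right by lra.
  apply Rle_trans with (INR (S n) * M ^ n * ((M - (x ^ 2 + y ^ 2)) * Rabs (omega x y xi eta))).
  { rewrite <- Rmult_assoc; apply Rmult_le_compat_r; auto using pow_sub_pow_le. }
  pose proof (Rmult_le_compat_l _ _ _ Hcoef Hgap).
  replace (M ^ S n) with (M * M ^ n) by (simpl; ring).
  lra.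
Qed.

Lemma norm2_pow_le_rectangle (x y xi eta p q : R) (n : nat) :
  between x xi p -> between y eta q ->
  norm2 p q ^ (2 * n) <= 2 ^ n * Rmax (norm2 x y) (norm2 xi eta) ^ (2 * n).
Proof.
  intros Hp Hq.
  unfold norm2 at 2 3; rewrite Rmax_sqrt, sqrt_pow_double, norm2_pow_double, <- Rpow_mult_distr;
    auto using sqnorm_ge0; [| apply Rmax_case; apply sqnorm_ge0].
  apply pow_incr; split; [apply sqnorm_ge0|].
  pose proof between_sqr _ _ _ Hp; pose proof between_sqr _ _ _ Hq.
  pose proof (Rmax_l (x ^ 2 + y ^ 2) (xi ^ 2 + eta ^ 2)).
  pose proof (Rmax_r (x ^ 2 + y ^ 2) (xi ^ 2 + eta ^ 2)).
  lra.
Qed.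

Theorem proposition3p3 :
  forall (m : nat) (phi : R -> R -> R) (D : nat -> nat -> R -> R -> R) (C : R),
    (1 <= m)%nat ->
    smooth_family phi D ->
    0 < C ->
    (forall x y,
        Dk_bounded D 3 x y (C * norm2 x y ^ (2 * m - 1)) /\
        Dk_bounded D 2 x y (C * norm2 x y ^ (2 * m)) /\
        Dk_bounded D 1 x y (C * norm2 x y ^ (2 * m + 1))) ->
    exists C', 0 < C' /\
      forall x y xi eta,
        let mu := Rmax (norm2 x y) (norm2 xi eta) in
        Rabs (phi xi eta - phi x y + mu ^ (2 * m) * omega x y xi eta
              - (XF D m x y * (xi - x) + YF D m x y * (eta - y)))
        <= C' * mu ^ (2 * m) * norm2 (xi - x) (eta - y) ^ 2.
Proof.
  intros m phi D C _ [D00 HD] HC Hbound.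
  assert (H2m : 0 < 2 ^ m) by (apply pow_lt; lra).
  exists (2 * C * 2 ^ m + 2 * INR m); split; [pose proof pos_INR m; nra|].
  intros x y xi eta mu.
  assert (Hmu_pow : mu ^ (2 * m) = Rmax (x ^ 2 + y ^ 2) (xi ^ 2 + eta ^ 2) ^ m).
  { unfold mu, norm2; rewrite Rmax_sqrt by apply sqnorm_ge0.
    apply sqrt_pow_double, Rmax_case; apply sqnorm_ge0. }
  assert (HD2 : forall i j p q, (i + j = 2)%nat -> between x xi p -> between y eta q ->
                 Rabs (D i j p q) <= C * (2 ^ m * mu ^ (2 * m))).
  { intros i j p q Hij Hp Hq.
    apply Rle_trans with (1 := proj1 (proj2 (Hbound p q)) i j Hij).
    apply Rmult_le_compat_l; [lra | apply norm2_pow_le_rectangle; auto]. }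
  pose proof (taylor2_rectangle D (fun i j => proj1 (proj2 (HD i j)))
    (fun i j => proj2 (proj2 (HD i j))) x y xi eta _ HD2) as Htaylor.
  pose proof (omega_increment_le x y xi eta m) as Homega; cbv zeta in Homega.
  rewrite <- D00.
  replace (D 0%nat 0%nat xi eta - D 0%nat 0%nat x y + mu ^ (2 * m) * omega x y xi eta
            - (XF D m x y * (xi - x) + YF D m x y * (eta - y)))
    with ((D 0%nat 0%nat xi eta - D 0%nat 0%nat x y
           - (D 1%nat 0%nat x y * (xi - x) + D 0%nat 1%nat x y * (eta - y)))
          + (mu ^ (2 * m) - norm2 x y ^ (2 * m)) * omega x y xi eta)
    by (unfold XF, YF, omega; ring).
  refine (Rle_trans _ _ _ (Rabs_triang _ _) _).
  rewrite norm2_pow_double, norm2_sqr, Hmu_pow in *.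
  lra.
Qed.
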